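(* Let $T$ be an arbitrary triangle, $\Gamma_{h,T}$ an open line segment with endpoints on $\partial T$ dividing $T$ into two nonempty open parts $T_h^\pm$, and $\mu^\pm>0$. Then every pair $(\mathbf{v},q)\in \mathbf{V}M_h^{IFE}(T)$ is uniquely determined by the values $N_{i,T}(\mathbf{v},q)$, $i=1,\dots,7$. Moreover, $$(\mathbf{v},q)=(\mathbf{v}^{J_0},q^{J_0})+(c_2\mathbf{v}^{J_2},c_1q^{J_1}),$$ where $\mathbf{v}^{J_0}=\sum_{i=1}^6N_{i,T}(\mathbf{v},q)\boldsymbol{\phi}_{i,T}$, $q^{J_0}=N_{7,T}(\mathbf{v},q)$, $$c_1=\sigma(\mu^--\mu^+,\mathbf{v}^{J_0},0)\mathbf{n}_h\cdot\mathbf{n}_h,\qquad c_2=\frac{\sigma(\mu^-/\mu^+-1,\mathbf{v}^{J_0},0)\mathbf{n}_h\cdot\mathbf{t}_h}{1+(\mu^-/\mu^+-1)\nabla\pi^{CR}_{h,T}w\cdot\mathbf{n}_h},$$ $q^{J_1}=z-\pi^0_{h,T}z$ and $\mathbf{v}^{J_2}=(w-\pi^{CR}_{h,T}w)\mathbf{t}_h$.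
   Context: $\mathbf{n}_h$ is the unit normal of $\Gamma_{h,T}$ pointing into $T_h^+$, $\mathbf{t}_h$ is $\mathbf{n}_h$ rotated $90^\circ$ clockwise. $\sigma(\mu,\mathbf{v},q)=2\mu\boldsymbol{\epsilon}(\mathbf{v})-q\mathbb{I}$, $\boldsymbol{\epsilon}(\mathbf{v})=\frac12(\nabla\mathbf{v}+(\nabla\mathbf{v})^T)$ (with $\mu$ any real number). For polynomials $g^\pm$ on $T$, $[\![g^\pm]\!]=g^+-g^-$. The local IFE space $\mathbf{V}M_h^{IFE}(T)$ is the set of pairs $(\mathbf{v},q)$ with $\mathbf{v}=\mathbf{v}^\pm$, $q=q^\pm$ on $T_h^\pm$, where $\mathbf{v}^\pm\in P_1(T)^2$, $q^\pm\in P_0(T)$ satisfy $[\![\sigma(\mu^\pm,\mathbf{v}^\pm,q^\pm)\mathbf{n}_h]\!]=\mathbf{0}$, $\mathbf{v}^+=\mathbf{v}^-$ on $\Gamma_{h,T}$, and $[\![\nabla\cdot\mathbf{v}^\pm]\!]=0$. With edges $e_1,e_2,e_3$ and $\mathbf{v}=(v_1,v_2)^T$: $N_{i,T}(\mathbf{v},q)=|e_i|^{-1}\int_{e_i}v_1$, $N_{3+i,T}=|e_i|^{-1}\int_{e_i}v_2$ ($i=1,2,3$), $N_{7,T}=|T|^{-1}\int_Tq$. $\lambda_{i,T}\in P_1(T)$ are the Crouzeix–Raviart basis functions, $|e_j|^{-1}\int_{e_j}\lambda_{i,T}=\delta_{ij}$, and $\boldsymbol{\phi}_{i,T}=(\lambda_{i,T},0)^T$,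 $\boldsymbol{\phi}_{i+3,T}=(0,\lambda_{i,T})^T$, $i=1,2,3$. $\pi^{CR}_{h,T}$ is the linear interpolant matching the three edge integrals, $\pi^0_{h,T}$ the mean over $T$. $z=-1$ on $T_h^+$, $z=0$ on $T_h^-$; $w=\operatorname{dist}(\cdot,\Gamma_{h,T})$ on $T_h^+$, $w=0$ on $T_h^-$. *)

From Stdlib Require Import Reals List.
From Coquelicot Require Import Coquelicot.
Open Scope R_scope.

Definition vec := (R * R)%type.
Definition v2add (x y : vec) : vec := (fst x + fst y, snd x + snd y).
Definition v2sub (x y : vec) : vec := (fst x - fst y, snd x - snd y).
Definition v2scal (c : R) (x : vec) : vec := (c * fst x, c * snd x).
Definition v2dot (x y : vec) : R := fst x * fst y + snd x * snd y.
Definition rot_cw (x : vec) : vec := (snd x, - fst x).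

(** matrices stored by rows *)
Definition mat := (vec * vec)%type.
Definition mvec (A : mat) (x : vec) : vec := (v2dot (fst A) x, v2dot (snd A) x).
Definition mtr (A : mat) : mat :=
  ((fst (fst A), fst (snd A)), (snd (fst A), snd (snd A))).
Definition madd (A B : mat) : mat := (v2add (fst A) (fst B), v2add (snd A) (snd B)).
Definition mscal (c : R) (A : mat) : mat := (v2scal c (fst A), v2scal c (snd A)).
Definition mid : mat := ((1, 0), (0, 1)).

Record P1 := mkP1 { p1c : R ; p1g : vec }.
Definition p1eval (p : P1) (x : vec) : R := p1c p + v2dot (p1g p) x.
Definition p1grad (p : P1) : vec := p1g p.
Definition p1add (p q : P1) : P1 := mkP1 (p1c p + p1c q) (v2add (p1g p) (p1g q)).
Definition p1scal (c : R) (p : P1) : P1 := mkP1 (c * p1c p) (v2scal c (p1g p)).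
Definition p1zero : P1 := mkP1 0 (0, 0).

Definition P1v := (P1 * P1)%type.
Definition p1veval (v : P1v) (x : vec) : vec := (p1eval (fst v) x, p1eval (snd v) x).
Definition p1vadd (v w : P1v) : P1v := (p1add (fst v) (fst w), p1add (snd v) (snd w)).
Definition p1vscal (c : R) (v : P1v) : P1v := (p1scal c (fst v), p1scal c (snd v)).
Definition p1vzero : P1v := (p1zero, p1zero).
(** (grad v)_{ij} = d_j v_i : row i is grad v_i *)
Definition p1vgrad (v : P1v) : mat := (p1grad (fst v), p1grad (snd v)).
Definition p1vdiv (v : P1v) : R := fst (p1grad (fst v)) + snd (p1grad (snd v)).
Definition epsilon (v : P1v) : mat :=
  mscal (1/2) (madd (p1vgrad v) (mtr (p1vgrad v))).
Definition sigma (mu : R) (v : P1v) (q : R) : mat :=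
  madd (mscal (2 * mu) (epsilon v)) (mscal (- q) mid).

(** * Geometry: triangle with vertices A1 A2 A3 and the interface line
      {x | n . x = d}, with n a unit normal. *)
Record geom := mkGeom { gA1 : vec ; gA2 : vec ; gA3 : vec ; gn : vec ; gd : R }.

Definition tri_map (g : geom) (s t : R) : vec :=
  v2add (gA1 g) (v2add (v2scal s (v2sub (gA2 g) (gA1 g)))
                       (v2scal t (v2sub (gA3 g) (gA1 g)))).
Definition tri_nondeg (g : geom) : Prop :=
  let u := v2sub (gA2 g) (gA1 g) in let w := v2sub (gA3 g) (gA1 g) in
  fst u * snd w - snd u * fst w <> 0.
Definition in_Tint (g : geom) (x : vec) : Prop :=
  exists s t, 0 < s /\ 0 < t /\ s + t < 1 /\ x = tri_map g s t.
(** T_h^+, T_h^- and Gamma_{h,T}; n_h points into T_h^+ *)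
Definition in_Tp (g : geom) (x : vec) : Prop := in_Tint g x /\ gd g < v2dot (gn g) x.
Definition in_Tm (g : geom) (x : vec) : Prop := in_Tint g x /\ v2dot (gn g) x < gd g.
Definition on_Gamma (g : geom) (x : vec) : Prop := in_Tint g x /\ v2dot (gn g) x = gd g.
Definition tangent (g : geom) : vec := rot_cw (gn g).

Definition edge (g : geom) (i : nat) : vec * vec :=
  match i with
  | 1%nat => (gA2 g, gA3 g)
  | 2%nat => (gA3 g, gA1 g)
  | _ => (gA1 g, gA2 g)
  end.
(** |e|^{-1} \int_e f, via the affine (constant-speed) parametrization *)
Definition edge_mean (e : vec * vec) (f : vec -> R) : R :=
  RInt (fun t => f (v2add (fst e) (v2scal t (v2sub (snd e) (fst e))))) 0 1.
(** |T|^{-1} \int_T f, via the affine map from the reference triangle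
    (|T| = |det J|/2, so the Jacobian cancels) *)
Definition tri_mean (g : geom) (f : vec -> R) : R :=
  2 * RInt (fun s => RInt (fun t => f (tri_map g s t)) 0 (1 - s)) 0 1.

Definition pw {A : Type} (g : geom) (fp fm : vec -> A) (x : vec) : A :=
  if Rlt_dec (gd g) (v2dot (gn g) x) then fp x else fm x.

Record ife := mkIFE { vp : P1v ; vm : P1v ; qp : R ; qm : R }.
Definition vfun (g : geom) (D : ife) : vec -> vec := pw g (p1veval (vp D)) (p1veval (vm D)).
Definition qfun (g : geom) (D : ife) : vec -> R := pw g (fun _ => qp D) (fun _ => qm D).

Definition in_IFE (g : geom) (mup mum : R) (D : ife) : Prop :=
  v2sub (mvec (sigma mup (vp D) (qp D)) (gn g)) (mvec (sigma mum (vm D) (qm D)) (gn g)) = (0, 0)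
  /\ (forall x, on_Gamma g x -> p1veval (vp D) x = p1veval (vm D) x)
  /\ p1vdiv (vp D) - p1vdiv (vm D) = 0.

Definition Ndof (g : geom) (D : ife) (i : nat) : R :=
  match i with
  | 1%nat | 2%nat | 3%nat => edge_mean (edge g i) (fun x => fst (vfun g D x))
  | 4%nat | 5%nat | 6%nat => edge_mean (edge g (i - 3)) (fun x => snd (vfun g D x))
  | 7%nat => tri_mean g (qfun g D)
  | _ => 0
  end.

Definition is_CR_basis (g : geom) (lam : nat -> P1) : Prop :=
  forall i j, (1 <= i <= 3)%nat -> (1 <= j <= 3)%nat ->
    edge_mean (edge g j) (p1eval (lam i)) = if Nat.eqb i j then 1 else 0.

Definition phi (lam : nat -> P1) (i : nat) : P1v :=
  if Nat.leb i 3 then (lam i, p1zero) else (p1zero, lam (i - 3)%nat).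

Definition piCR (g : geom) (lam : nat -> P1) (f : vec -> R) : P1 :=
  fold_right (fun i acc => p1add (p1scal (edge_mean (edge g i) f) (lam i)) acc)
    p1zero (List.seq 1 3).
Definition pi0 (g : geom) (f : vec -> R) : R := tri_mean g f.

Definition zfun (g : geom) : vec -> R := pw g (fun _ => -1) (fun _ => 0).
Definition wfun (g : geom) : vec -> R :=
  pw g (fun y => Rabs (v2dot (gn g) y - gd g)) (fun _ => 0).

Definition vJ0 (g : geom) (lam : nat -> P1) (D : ife) : P1v :=
  fold_right (fun i acc => p1vadd (p1vscal (Ndof g D i) (phi lam i)) acc)
    p1vzero (List.seq 1 6).
Definition qJ0 (g : geom) (D : ife) : R := Ndof g D 7.
Definition qJ1 (g : geom) (x : vec) : R := zfun g x - pi0 g (zfun g).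
Definition vJ2 (g : geom) (lam : nat -> P1) (x : vec) : vec :=
  v2scal (wfun g x - p1eval (piCR g lam (wfun g)) x) (tangent g).

Definition cJ1 (g : geom) (lam : nat -> P1) (mup mum : R) (D : ife) : R :=
  v2dot (mvec (sigma (mum - mup) (vJ0 g lam D) 0) (gn g)) (gn g).
Definition c2_den (g : geom) (lam : nat -> P1) (mup mum : R) : R :=
  1 + (mum / mup - 1) * v2dot (p1grad (piCR g lam (wfun g))) (gn g).
Definition cJ2 (g : geom) (lam : nat -> P1) (mup mum : R) (D : ife) : R :=
  v2dot (mvec (sigma (mum / mup - 1) (vJ0 g lam D) 0) (gn g)) (tangent g)
  / c2_den g lam mup mum.

(* Continuity of v across Gamma makes each component of v^+ - v^- a multiple of the level
   function n.x - d, and continuity of the divergence makes the jump vector tangential, so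
   v = v^- + a w t and q = q^- + (q^+ - q^-) [n.x > d]. The normal and tangential components of
   the stress condition express a and q^+ - q^- through eps(v^-) n. On the degrees of freedom
   side, the CR interpolant of v is v^- + a (pi^CR w) t, and an explicit computation of the edge
   means of the positive part of an affine function shows that pi^CR w is rho (n.x - d) plus a
   constant, with 0 < rho < 1. Hence the denominator of c_2 is 1 + (mu^-/mu^+ - 1) rho > 0,
   c_2 = a and c_1 = q^- - q^+, which is the representation; it depends on (v, q) only through
   the seven degrees of freedom, whence unisolvence. *)

From Stdlib Require Import Reals List Lra Psatz Nsatz.
From Coquelicot Require Import Coquelicot.
Open Scope R_scope.

(** * Integrals of piecewise affine functions on an interval *)

Lemma is_RInt_affine (a b u v : R) :
  is_RInt (fun t => a + b * t) u v ((v - u) * (a + b * (u + v) / 2)).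
Proof.
  replace ((v - u) * (a + b * (u + v) / 2))
    with (minus (a * v + b * v * v / 2) (a * u + b * u * u / 2))
    by (unfold minus, plus, opp; simpl; field).
  apply (is_RInt_derive (fun t => a * t + b * t * t / 2)).
  - intros x _. auto_derive; [easy | field].
  - intros x _. apply (ex_derive_continuous (fun t => a + b * t)). auto_derive. easy.
Qed.

Lemma RInt_affine (a b u v : R) :
  RInt (fun t => a + b * t) u v = (v - u) * (a + b * (u + v) / 2).
Proof. apply is_RInt_unique, is_RInt_affine. Qed.

Lemma RInt_lin (f h : R -> R) (a b c1 c2 : R) : ex_RInt f a b -> ex_RInt h a b ->
  RInt (fun x => c1 * f x + c2 * h x) a b = c1 * RInt f a b + c2 * RInt h a b.
Proof.
  intros Hf Hh. apply (is_RInt_unique (V := R_CompleteNormedModule)).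
  exact (is_RInt_plus _ _ _ _ _ _ (is_RInt_scal _ _ _ c1 _ (RInt_correct _ _ _ Hf))
           (is_RInt_scal _ _ _ c2 _ (RInt_correct _ _ _ Hh))).
Qed.

Lemma continuous_affine (a b x : R) : continuous (fun t => a + b * t) x.
Proof. apply (ex_derive_continuous (fun t => a + b * t)). auto_derive. easy. Qed.

Lemma continuous_pos_part_affine (a b x : R) : continuous (fun t => Rmax (a + b * t) 0) x.
Proof.
  apply (continuous_ext (fun t => (a + b * t + Rabs (a + b * t)) / 2)).
  { intros t. unfold Rmax, Rabs. destruct Rle_dec, Rcase_abs; lra. }
  apply (continuous_mult (fun t => a + b * t + Rabs (a + b * t)) (fun _ => / 2));
    [|apply continuous_const].
  apply (continuous_plus (fun t => a + b * t) (fun t => Rabs (a + b * t))).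
  - apply continuous_affine.
  - apply continuous_Rabs_comp, continuous_affine.
Qed.

Lemma ex_RInt_continuous_R (f : R -> R) (a b : R) :
  (forall x, continuous f x) -> ex_RInt f a b.
Proof. intros Hf. apply (ex_RInt_continuous (V := R_CompleteNormedModule)). intros; apply Hf. Qed.

Lemma ex_RInt_pos_part_affine (a b u v : R) : ex_RInt (fun t => Rmax (a + b * t) 0) u v.
Proof. apply ex_RInt_continuous_R, continuous_pos_part_affine. Qed.

Definition heaviside (x : R) : R := if Rlt_dec 0 x then 1 else 0.

Lemma heaviside_scale (c x : R) : 0 < c -> heaviside (c * x) = heaviside x.
Proof.
  intros Hc. unfold heaviside.
  destruct (Rlt_dec 0 (c * x)), (Rlt_dec 0 x); auto; exfalso; nra.
Qed.

Definition clamp (x lo hi : R) : R := Rmax lo (Rmin x hi).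

Lemma clamp_bounds (x lo hi : R) : lo <= hi -> lo <= clamp x lo hi <= hi.
Proof. unfold clamp, Rmax, Rmin. intros; repeat destruct Rle_dec; lra. Qed.

Lemma heaviside_affine_step (a b lo hi : R) : b <> 0 -> lo <= hi ->
  let k := clamp (- a / b) lo hi in
  lo <= k <= hi /\
  (forall t, lo < t < k -> heaviside (a + b * t) = heaviside (- b)) /\
  (forall t, k < t < hi -> heaviside (a + b * t) = heaviside b).
Proof.
  intros Hb Hlh k. set (r := - a / b) in k.
  assert (Ha : a + b * r = 0) by (unfold r; field; auto).
  split; [apply clamp_bounds; auto | split]; intros t Ht.
  - assert (Htr : t < r).
    { unfold k, clamp, Rmax, Rmin in Ht. repeat destruct Rle_dec; lra. }
    replace (a + b * t) with ((r - t) * - b) by lra.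
    apply heaviside_scale; lra.
  - assert (Htr : r < t).
    { unfold k, clamp, Rmax, Rmin in Ht. repeat destruct Rle_dec; lra. }
    replace (a + b * t) with ((t - r) * b) by lra.
    apply heaviside_scale; lra.
Qed.

Lemma ex_RInt_heaviside_affine_mul (a b lo hi : R) (h : R -> R) :
  lo <= hi -> (forall x, continuous h x) ->
  ex_RInt (fun t => heaviside (a + b * t) * h t) lo hi.
Proof.
  intros Hlh Hh.
  assert (Hc : forall c u v, ex_RInt (fun t => c * h t) u v).
  { intros c u v. apply ex_RInt_continuous_R. intros x.
    apply (continuous_mult (fun _ => c) h); [apply continuous_const | apply Hh]. }
  destruct (Req_dec b 0) as [Hb | Hb].
  - subst b. apply (ex_RInt_ext (fun t => heaviside a * h t)); [|apply Hc].
    intros t _. rewrite Rmult_0_l, Rplus_0_r. reflexivity.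
  - destruct (heaviside_affine_step a b lo hi Hb Hlh) as (Hk & Hl & Hr).
    apply (ex_RInt_Chasles _ lo (clamp (- a / b) lo hi) hi).
    + apply (ex_RInt_ext (fun t => heaviside (- b) * h t)); [|apply Hc].
      intros t Ht. rewrite Rmin_left, Rmax_right in Ht by lra. rewrite Hl; auto.
    + apply (ex_RInt_ext (fun t => heaviside b * h t)); [|apply Hc].
      intros t Ht. rewrite Rmin_left, Rmax_right in Ht by lra. rewrite Hr; auto.
Qed.

(* Written through positive parts so that it is visibly continuous in a and b. *)
Lemma is_RInt_heaviside_affine (a b lo hi : R) : b <> 0 -> lo <= hi ->
  is_RInt (fun t => heaviside (a + b * t)) lo hi
    ((Rmax (a + b * hi) 0 - Rmax (a + b * lo) 0) / b).
Proof.
  intros Hb Hlh.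
  destruct (heaviside_affine_step a b lo hi Hb Hlh) as (Hk & Hl & Hr).
  set (k := clamp (- a / b) lo hi) in *.
  assert (Hleft : is_RInt (fun t => heaviside (a + b * t)) lo k (scal (k - lo) (heaviside (- b)))).
  { apply (is_RInt_ext (fun _ => heaviside (- b))); [|exact (is_RInt_const lo k _)].
    intros t Ht. rewrite Rmin_left, Rmax_right in Ht by lra. rewrite Hl; auto. }
  assert (Hright : is_RInt (fun t => heaviside (a + b * t)) k hi (scal (hi - k) (heaviside b))).
  { apply (is_RInt_ext (fun _ => heaviside b)); [|exact (is_RInt_const k hi _)].
    intros t Ht. rewrite Rmin_left, Rmax_right in Ht by lra. rewrite Hr; auto. }
  replace ((Rmax (a + b * hi) 0 - Rmax (a + b * lo) 0) / b)
    with (plus (scal (k - lo) (heaviside (- b))) (scal (hi - k) (heaviside b))).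
  - exact (is_RInt_Chasles _ _ _ _ _ _ Hleft Hright).
  - set (r := - a / b) in k.
    assert (Ha : a = - (b * r)) by (unfold r; field; auto).
    unfold plus, scal; simpl; unfold mult; simpl.
    apply (Rmult_eq_reg_r b); [|auto]. unfold Rdiv. rewrite Rmult_assoc, Rinv_l, Rmult_1_r by auto.
    unfold k; clearbody r; subst a. unfold clamp, heaviside, Rmax, Rmin.
    repeat destruct Rle_dec; repeat destruct Rlt_dec; nra.
Qed.

Lemma ex_RInt_triangle_heaviside (a b c : R) :
  ex_RInt (fun s => RInt (fun t => heaviside ((a + b * s) + c * t)) 0 (1 - s)) 0 1.
Proof.
  destruct (Req_dec c 0) as [Hc | Hc].
  - subst c. apply (ex_RInt_ext (fun s => heaviside (a + b * s) * (1 + -1 * s))).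
    + intros s _.
      rewrite (RInt_ext _ (fun _ => heaviside (a + b * s))) by (intros; f_equal; ring).
      rewrite RInt_const. unfold scal; simpl; unfold mult; simpl. ring.
    + apply ex_RInt_heaviside_affine_mul; [lra | intros; apply continuous_affine].
  - apply (ex_RInt_ext (fun s => (Rmax ((a + c) + (b - c) * s) 0 - Rmax (a + b * s) 0) / c)).
    + intros s Hs. rewrite Rmin_left, Rmax_right in Hs by lra.
      rewrite (is_RInt_unique _ _ _ _ (is_RInt_heaviside_affine (a + b * s) c 0 (1 - s) Hc ltac:(lra))).
      replace ((a + b * s) + c * (1 - s)) with ((a + c) + (b - c) * s) by ring.
      rewrite Rmult_0_r, Rplus_0_r. reflexivity.
    + apply ex_RInt_continuous_R. intros s.
      apply (continuous_mult (fun s => Rmax ((a + c) + (b - c) * s) 0 - Rmax (a + b * s) 0)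
               (fun _ => / c)); [|apply continuous_const].
      apply (continuous_plus (fun s => Rmax ((a + c) + (b - c) * s) 0)
               (fun s => opp (Rmax (a + b * s) 0))).
      * apply continuous_pos_part_affine.
      * apply (continuous_opp (fun s => Rmax (a + b * s) 0)), continuous_pos_part_affine.
Qed.

(** * Edge means of the positive part of an affine function *)

Definition pos_mean (a b : R) : R := RInt (fun t => Rmax (a + (b - a) * t) 0) 0 1.

Lemma pos_mean_nonpos (a b : R) : a <= 0 -> b <= 0 -> pos_mean a b = 0.
Proof.
  intros Ha Hb. unfold pos_mean.
  rewrite (RInt_ext _ (fun _ => 0)).
  - rewrite RInt_const. unfold scal; simpl; unfold mult; simpl. ring.
  - intros t Ht. rewrite Rmin_left, Rmax_right in Ht by lra. apply Rmax_right. nra.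
Qed.

Lemma pos_mean_pos_nonpos (a b : R) : 0 < a -> b <= 0 -> pos_mean a b = a * a / (2 * (a - b)).
Proof.
  intros Ha Hb. unfold pos_mean. set (r := a / (a - b)).
  assert (Hr : r * (a - b) = a) by (unfold r; field; lra).
  assert (Hr01 : 0 < r <= 1) by (split; nra).
  rewrite <- (RInt_Chasles _ 0 r 1) by apply ex_RInt_pos_part_affine.
  rewrite (RInt_ext _ (fun t => a + (b - a) * t) 0 r), (RInt_ext _ (fun _ => 0) r 1).
  - rewrite RInt_const, RInt_affine. unfold plus, scal; simpl; unfold mult; simpl.
    unfold r. field. lra.
  - intros t Ht. rewrite Rmin_left, Rmax_right in Ht by lra. apply Rmax_right. nra.
  - intros t Ht. rewrite Rmin_left, Rmax_right in Ht by lra. apply Rmax_left. nra.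
Qed.

Lemma pos_mean_nonpos_pos (a b : R) : a <= 0 -> 0 < b -> pos_mean a b = b * b / (2 * (b - a)).
Proof.
  intros Ha Hb. unfold pos_mean. set (r := a / (a - b)).
  assert (Hr : r * (a - b) = a) by (unfold r; field; lra).
  assert (Hr01 : 0 <= r < 1) by (split; nra).
  rewrite <- (RInt_Chasles _ 0 r 1) by apply ex_RInt_pos_part_affine.
  rewrite (RInt_ext _ (fun _ => 0) 0 r), (RInt_ext _ (fun t => a + (b - a) * t) r 1).
  - rewrite RInt_const, RInt_affine. unfold plus, scal; simpl; unfold mult; simpl.
    unfold r. field. lra.
  - intros t Ht. rewrite Rmin_left, Rmax_right in Ht by lra. apply Rmax_left. nra.
  - intros t Ht. rewrite Rmin_left, Rmax_right in Ht by lra. apply Rmax_right. nra.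
Qed.

(* max(x, 0) = x + max(-x, 0) *)
Lemma pos_mean_opp (a b : R) : pos_mean a b = (a + b) / 2 + pos_mean (- a) (- b).
Proof.
  unfold pos_mean.
  rewrite (RInt_ext _ (fun t => 1 * (a + (b - a) * t) + 1 * Rmax (- a + (- b - - a) * t) 0)).
  - rewrite RInt_lin, RInt_affine by (apply ex_RInt_continuous_R;
      first [apply continuous_affine | apply continuous_pos_part_affine]).
    field.
  - intros t _. simpl. unfold Rmax. destruct Rle_dec, Rle_dec; lra.
Qed.

(* With f_i the level function at vertex A_i, this says that the CR interpolant of its positive
   part is rho times the level function plus C. *)
Definition pos_mean_fit (f1 f2 f3 : R) : Prop :=
  exists rho C, 0 < rho < 1 /\
    pos_mean f2 f3 = rho * ((f2 + f3) / 2) + C /\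
    pos_mean f3 f1 = rho * ((f3 + f1) / 2) + C /\
    pos_mean f1 f2 = rho * ((f1 + f2) / 2) + C.

Lemma pos_mean_fit_rot (f1 f2 f3 : R) : pos_mean_fit f2 f3 f1 -> pos_mean_fit f1 f2 f3.
Proof. intros (rho & C & H). exists rho, C. tauto. Qed.

Lemma pos_mean_fit_opp (f1 f2 f3 : R) : pos_mean_fit (- f1) (- f2) (- f3) -> pos_mean_fit f1 f2 f3.
Proof.
  intros (rho & C & Hrho & H1 & H2 & H3). exists (1 - rho), C.
  rewrite (pos_mean_opp f2 f3), (pos_mean_opp f3 f1), (pos_mean_opp f1 f2), H1, H2, H3.
  repeat split; [lra | lra | field ..].
Qed.

Lemma pos_mean_fit_one_pos (a b c : R) : 0 < a -> b <= 0 -> c <= 0 -> b + c < 0 ->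
  pos_mean_fit a b c.
Proof.
  intros Ha Hb Hc Hbc. set (rho := a * a / ((a - b) * (a - c))).
  assert (Hrho : rho * ((a - b) * (a - c)) = a * a) by (unfold rho; field; lra).
  assert (0 < (a - b) * (a - c)) by nra.
  exists rho, (- (rho * ((b + c) / 2))).
  rewrite pos_mean_nonpos, pos_mean_nonpos_pos, pos_mean_pos_nonpos by lra.
  repeat split; try nra.
  - apply (Rmult_eq_reg_r (2 * (a - c))); [|lra]. field_simplify; [|lra]. nra.
  - apply (Rmult_eq_reg_r (2 * (a - b))); [|lra]. field_simplify; [|lra]. nra.
Qed.

Lemma pos_mean_fit_sign_change (f1 f2 f3 : R) :
  (0 < f1 \/ 0 < f2 \/ 0 < f3) -> (f1 < 0 \/ f2 < 0 \/ f3 < 0) -> pos_mean_fit f1 f2 f3.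
Proof.
  intros Hpos Hneg.
  destruct (Rle_dec f1 0), (Rle_dec f2 0), (Rle_dec f3 0).
  - lra.
  - apply pos_mean_fit_rot, pos_mean_fit_rot, pos_mean_fit_one_pos; lra.
  - apply pos_mean_fit_rot, pos_mean_fit_one_pos; lra.
  - apply pos_mean_fit_opp, pos_mean_fit_one_pos; lra.
  - apply pos_mean_fit_one_pos; lra.
  - apply pos_mean_fit_rot, pos_mean_fit_opp, pos_mean_fit_one_pos; lra.
  - apply pos_mean_fit_rot, pos_mean_fit_rot, pos_mean_fit_opp, pos_mean_fit_one_pos; lra.
  - lra.
Qed.

(** * Affine functions on a triangle and the Crouzeix-Raviart interpolant *)

Lemma p1eval_add (p q : P1) (x : vec) : p1eval (p1add p q) x = p1eval p x + p1eval q x.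
Proof. destruct p as [c [a b]], q as [c' [a' b']]. unfold p1eval, p1add, v2dot, v2add; simpl. ring. Qed.

Lemma p1eval_scal (c : R) (p : P1) (x : vec) : p1eval (p1scal c p) x = c * p1eval p x.
Proof. destruct p as [c' [a b]]. unfold p1eval, p1scal, v2dot, v2scal; simpl. ring. Qed.

Lemma p1eval_zero (x : vec) : p1eval p1zero x = 0.
Proof. unfold p1eval, p1zero, v2dot; simpl. ring. Qed.

Lemma p1_ext (p q : P1) : (forall x, p1eval p x = p1eval q x) -> p = q.
Proof.
  destruct p as [c [a b]], q as [c' [a' b']]. unfold p1eval, v2dot; simpl. intros H.
  assert (H0 := H (0, 0)). assert (H1 := H (1, 0)). assert (H2 := H (0, 1)). simpl in *.
  replace c' with c by lra. replace a' with a by lra. replace b' with b by lra. reflexivity.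
Qed.

Lemma p1eval_tri_map (g : geom) (p : P1) (s t : R) :
  p1eval p (tri_map g s t) =
  (p1eval p (gA1 g) + (p1eval p (gA2 g) - p1eval p (gA1 g)) * s)
  + (p1eval p (gA3 g) - p1eval p (gA1 g)) * t.
Proof.
  destruct g as [[x1 y1] [x2 y2] [x3 y3] n d], p as [c [a b]].
  unfold p1eval, tri_map, v2dot, v2add, v2sub, v2scal; simpl. ring.
Qed.

Lemma tri_mean_ext (g : geom) (f h : vec -> R) :
  (forall x, f x = h x) -> tri_mean g f = tri_mean g h.
Proof.
  intros H. unfold tri_mean. f_equal. apply RInt_ext. intros s _. apply RInt_ext. intros; apply H.
Qed.

Lemma tri_mean_heaviside_affine (g : geom) (p : P1) (q0 c : R) :
  tri_mean g (fun x => q0 + c * heaviside (p1eval p x))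
  = q0 + c * tri_mean g (fun x => heaviside (p1eval p x)).
Proof.
  set (a0 := p1eval p (gA1 g)). set (a1 := p1eval p (gA2 g) - a0). set (a2 := p1eval p (gA3 g) - a0).
  assert (Hp : forall s t, p1eval p (tri_map g s t) = (a0 + a1 * s) + a2 * t)
    by (intros; apply p1eval_tri_map).
  assert (Hinner : forall s, s <= 1 ->
    ex_RInt (fun t => heaviside (p1eval p (tri_map g s t))) 0 (1 - s)).
  { intros s Hs. apply (ex_RInt_ext (fun t => heaviside ((a0 + a1 * s) + a2 * t) * 1)).
    - intros t _. rewrite Hp. apply Rmult_1_r.
    - apply ex_RInt_heaviside_affine_mul; [lra | intros; apply continuous_const]. }
  assert (Houter :
    ex_RInt (fun s => RInt (fun t => heaviside (p1eval p (tri_map g s t))) 0 (1 - s)) 0 1).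
  { apply (ex_RInt_ext (fun s => RInt (fun t => heaviside ((a0 + a1 * s) + a2 * t)) 0 (1 - s))).
    - intros s _. apply RInt_ext. intros t _. rewrite Hp. reflexivity.
    - apply ex_RInt_triangle_heaviside. }
  unfold tri_mean.
  rewrite (RInt_ext _ (fun s => q0 * (1 + -1 * s)
                             + c * RInt (fun t => heaviside (p1eval p (tri_map g s t))) 0 (1 - s))).
  - rewrite RInt_lin, RInt_affine;
      [field | apply ex_RInt_continuous_R, continuous_affine | exact Houter].
  - intros s Hs. rewrite Rmin_left, Rmax_right in Hs by lra.
    rewrite (RInt_ext _ (fun t => q0 * 1 + c * heaviside (p1eval p (tri_map g s t))))
      by (intros; simpl; ring).
    rewrite RInt_lin, RInt_const; [| apply ex_RInt_continuous_R; intros; apply continuous_const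
                                   | apply Hinner; lra].
    unfold scal; simpl; unfold mult; simpl. ring.
Qed.

Definition midpoint (e : vec * vec) : vec := v2scal (1 / 2) (v2add (fst e) (snd e)).

Lemma p1eval_midpoint (p : P1) (e : vec * vec) :
  p1eval p (midpoint e) = (p1eval p (fst e) + p1eval p (snd e)) / 2.
Proof.
  destruct p as [c [a b]], e as [[x1 y1] [x2 y2]].
  unfold midpoint, p1eval, v2dot, v2add, v2scal; simpl. field.
Qed.

Lemma p1eval_edge (p : P1) (e : vec * vec) (t : R) :
  p1eval p (v2add (fst e) (v2scal t (v2sub (snd e) (fst e))))
  = p1eval p (fst e) + (p1eval p (snd e) - p1eval p (fst e)) * t.
Proof.
  destruct p as [c [a b]], e as [[x1 y1] [x2 y2]].
  unfold p1eval, v2dot, v2add, v2scal, v2sub; simpl. ring.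
Qed.

Definition edge_integrable (e : vec * vec) (f : vec -> R) : Prop :=
  ex_RInt (fun t => f (v2add (fst e) (v2scal t (v2sub (snd e) (fst e))))) 0 1.

Lemma edge_integrable_P1 (p : P1) (e : vec * vec) : edge_integrable e (p1eval p).
Proof.
  unfold edge_integrable. apply ex_RInt_continuous_R. intros t.
  apply (continuous_ext (fun t => p1eval p (fst e) + (p1eval p (snd e) - p1eval p (fst e)) * t)).
  - intros; symmetry; apply p1eval_edge.
  - apply continuous_affine.
Qed.

Lemma edge_integrable_pos_part (p : P1) (e : vec * vec) :
  edge_integrable e (fun x => Rmax (p1eval p x) 0).
Proof.
  unfold edge_integrable.
  apply (ex_RInt_ext (fun t => Rmax (p1eval p (fst e) + (p1eval p (snd e) - p1eval p (fst e)) * t) 0)).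
  - intros; rewrite p1eval_edge; reflexivity.
  - apply ex_RInt_pos_part_affine.
Qed.

Lemma edge_mean_ext (e : vec * vec) (f h : vec -> R) :
  (forall x, f x = h x) -> edge_mean e f = edge_mean e h.
Proof. intros H. unfold edge_mean. apply RInt_ext. intros; apply H. Qed.

Lemma edge_mean_add_scal (e : vec * vec) (f h : vec -> R) (c : R) :
  edge_integrable e f -> edge_integrable e h ->
  edge_mean e (fun x => f x + c * h x) = edge_mean e f + c * edge_mean e h.
Proof.
  intros Hf Hh. unfold edge_mean, edge_integrable in *.
  set (E t := v2add (fst e) (v2scal t (v2sub (snd e) (fst e)))).
  rewrite (RInt_ext _ (fun t => 1 * f (E t) + c * h (E t))) by (intros; rewrite Rmult_1_l; reflexivity).
  rewrite RInt_lin by assumption. apply Rplus_eq_compat_r, Rmult_1_l.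
Qed.

Lemma edge_mean_P1 (p : P1) (e : vec * vec) : edge_mean e (p1eval p) = p1eval p (midpoint e).
Proof.
  unfold edge_mean.
  rewrite (RInt_ext _ (fun t => p1eval p (fst e) + (p1eval p (snd e) - p1eval p (fst e)) * t)).
  - rewrite RInt_affine, p1eval_midpoint. field.
  - intros; apply p1eval_edge.
Qed.

Lemma edge_mean_pos_part (p : P1) (e : vec * vec) :
  edge_mean e (fun x => Rmax (p1eval p x) 0) = pos_mean (p1eval p (fst e)) (p1eval p (snd e)).
Proof. unfold edge_mean, pos_mean. apply RInt_ext. intros; rewrite p1eval_edge; reflexivity. Qed.

Lemma CR_basis_midpoint (g : geom) (lam : nat -> P1) (i j : nat) :
  is_CR_basis g lam -> (1 <= i <= 3)%nat -> (1 <= j <= 3)%nat ->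
  p1eval (lam i) (midpoint (edge g j)) = if Nat.eqb i j then 1 else 0.
Proof. intros HL Hi Hj. rewrite <- edge_mean_P1. apply HL; assumption. Qed.

Lemma p1_eq_vertices (g : geom) (p q : P1) : tri_nondeg g ->
  p1eval p (gA1 g) = p1eval q (gA1 g) -> p1eval p (gA2 g) = p1eval q (gA2 g) ->
  p1eval p (gA3 g) = p1eval q (gA3 g) -> p = q.
Proof.
  unfold tri_nondeg, p1eval, v2dot, v2sub.
  destruct g as [[x1 y1] [x2 y2] [x3 y3] n d], p as [c [a b]], q as [c' [a' b']]; simpl.
  intros HT H1 H2 H3.
  set (det := (x2 - x1) * (y3 - y1) - (y2 - y1) * (x3 - x1)) in HT.
  assert (Ea : (a - a') * det = 0) by (unfold det; nsatz).
  assert (Eb : (b - b') * det = 0) by (unfold det; nsatz).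
  apply Rmult_integral in Ea as [Ea | Ea]; [|contradiction].
  apply Rmult_integral in Eb as [Eb | Eb]; [|contradiction].
  replace a' with a in * by lra. replace b' with b in * by lra. replace c' with c by lra.
  reflexivity.
Qed.

Lemma p1_eq_midpoints (g : geom) (p q : P1) : tri_nondeg g ->
  (forall j, (1 <= j <= 3)%nat -> p1eval p (midpoint (edge g j)) = p1eval q (midpoint (edge g j))) ->
  p = q.
Proof.
  intros HT H.
  assert (H1 := H 1%nat ltac:(lia)). assert (H2 := H 2%nat ltac:(lia)).
  assert (H3 := H 3%nat ltac:(lia)).
  rewrite !p1eval_midpoint in H1, H2, H3. cbn [edge fst snd] in H1, H2, H3.
  apply (p1_eq_vertices g _ _ HT); lra.
Qed.

Lemma piCR_ext (g : geom) (lam : nat -> P1) (f h : vec -> R) :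
  (forall x, f x = h x) -> piCR g lam f = piCR g lam h.
Proof. intros H. unfold piCR; simpl. rewrite !(edge_mean_ext _ f h H). reflexivity. Qed.

Lemma piCR_midpoint (g : geom) (lam : nat -> P1) (f : vec -> R) (j : nat) :
  is_CR_basis g lam -> (1 <= j <= 3)%nat ->
  p1eval (piCR g lam f) (midpoint (edge g j)) = edge_mean (edge g j) f.
Proof.
  intros HL Hj. unfold piCR; simpl.
  rewrite !p1eval_add, !p1eval_scal, p1eval_zero, !(CR_basis_midpoint g lam _ j HL) by lia.
  destruct j as [|[|[|[|j]]]]; try lia; simpl; ring.
Qed.

Lemma piCR_add_P1 (g : geom) (lam : nat -> P1) (p : P1) (c : R) (h : vec -> R) :
  tri_nondeg g -> is_CR_basis g lam ->
  (forall j, (1 <= j <= 3)%nat -> edge_integrable (edge g j) h) ->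
  piCR g lam (fun x => p1eval p x + c * h x) = p1add p (p1scal c (piCR g lam h)).
Proof.
  intros HT HL Hh. apply (p1_eq_midpoints g _ _ HT). intros j Hj.
  rewrite p1eval_add, p1eval_scal, !piCR_midpoint by assumption.
  rewrite edge_mean_add_scal, edge_mean_P1 by auto using edge_integrable_P1.
  reflexivity.
Qed.

(** * The interface *)

Definition level (g : geom) : P1 := mkP1 (- gd g) (gn g).

Lemma p1eval_level (g : geom) (x : vec) : p1eval (level g) x = v2dot (gn g) x - gd g.
Proof. unfold level, p1eval; simpl. ring. Qed.

Lemma wfun_pos_part (g : geom) (x : vec) : wfun g x = Rmax (p1eval (level g) x) 0.
Proof.
  rewrite p1eval_level. unfold wfun, pw. destruct Rlt_dec.
  - rewrite Rabs_right, Rmax_left; lra.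
  - rewrite Rmax_right; lra.
Qed.

Lemma qfun_heaviside (g : geom) (D : ife) (x : vec) :
  qfun g D x = qm D + (qp D - qm D) * heaviside (p1eval (level g) x).
Proof. rewrite p1eval_level. unfold qfun, pw, heaviside. destruct Rlt_dec, Rlt_dec; lra. Qed.

Lemma zfun_heaviside (g : geom) (x : vec) : zfun g x = 0 + -1 * heaviside (p1eval (level g) x).
Proof. rewrite p1eval_level. unfold zfun, pw, heaviside. destruct Rlt_dec, Rlt_dec; lra. Qed.

Lemma p1_pos_at_vertex (g : geom) (p : P1) (x : vec) :
  in_Tint g x -> 0 < p1eval p x ->
  0 < p1eval p (gA1 g) \/ 0 < p1eval p (gA2 g) \/ 0 < p1eval p (gA3 g).
Proof.
  intros (s & t & Hs & Ht & Hst & ->). rewrite p1eval_tri_map. intros Hpos.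
  destruct (Rlt_dec 0 (p1eval p (gA1 g))); [now left|].
  destruct (Rlt_dec 0 (p1eval p (gA2 g))); [now right; left|].
  destruct (Rlt_dec 0 (p1eval p (gA3 g))); [now right; right|].
  exfalso. nra.
Qed.

Lemma level_vertex_signs (g : geom) : (exists x, in_Tp g x) -> (exists x, in_Tm g x) ->
  (0 < p1eval (level g) (gA1 g) \/ 0 < p1eval (level g) (gA2 g) \/ 0 < p1eval (level g) (gA3 g)) /\
  (p1eval (level g) (gA1 g) < 0 \/ p1eval (level g) (gA2 g) < 0 \/ p1eval (level g) (gA3 g) < 0).
Proof.
  intros [xp [Hp Hlp]] [xm [Hm Hlm]]. split.
  - apply (p1_pos_at_vertex g _ xp Hp). rewrite p1eval_level. lra.
  - assert (H := p1_pos_at_vertex g (p1scal (-1) (level g)) xm Hm).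
    rewrite !p1eval_scal, p1eval_level in H. lra.
Qed.

Lemma piCR_wfun_grad (g : geom) (lam : nat -> P1) :
  tri_nondeg g -> is_CR_basis g lam -> (exists x, in_Tp g x) -> (exists x, in_Tm g x) ->
  exists rho, 0 < rho < 1 /\ p1grad (piCR g lam (wfun g)) = v2scal rho (gn g).
Proof.
  intros HT HL Hp Hm.
  destruct (level_vertex_signs g Hp Hm) as [Hpos Hneg].
  destruct (pos_mean_fit_sign_change _ _ _ Hpos Hneg) as (rho & C & Hrho & F1 & F2 & F3).
  exists rho. split; [exact Hrho|].
  assert (E : piCR g lam (wfun g) = p1add (p1scal rho (level g)) (mkP1 C (0, 0))).
  { apply (p1_eq_midpoints g _ _ HT). intros j Hj.
    rewrite piCR_midpoint, (edge_mean_ext _ _ _ (wfun_pos_part g)), edge_mean_pos_part by assumption.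
    rewrite p1eval_add, p1eval_scal, p1eval_midpoint.
    replace (p1eval (mkP1 C (0, 0)) _) with C by (unfold p1eval, v2dot; simpl; ring).
    destruct j as [|[|[|[|j]]]]; try lia; cbn [edge fst snd]; assumption. }
  rewrite E. unfold p1grad, p1add, p1scal, level, v2add, v2scal; simpl.
  f_equal; ring.
Qed.

Lemma Gamma_meets_interior (g : geom) : (exists x, in_Tp g x) -> (exists x, in_Tm g x) ->
  exists s t, 0 < s /\ 0 < t /\ s + t < 1 /\ p1eval (level g) (tri_map g s t) = 0.
Proof.
  intros [xp [(s1 & t1 & Hs1 & Ht1 & Hst1 & ->) Hp]] [xm [(s2 & t2 & Hs2 & Ht2 & Hst2 & ->) Hm]].
  set (f1 := p1eval (level g) (tri_map g s1 t1)). set (f2 := p1eval (level g) (tri_map g s2 t2)).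
  assert (Hf1 : 0 < f1) by (unfold f1; rewrite p1eval_level; lra).
  assert (Hf2 : f2 < 0) by (unfold f2; rewrite p1eval_level; lra).
  set (l := f2 / (f2 - f1)).
  assert (Hl : l * (f2 - f1) = f2) by (unfold l; field; lra).
  assert (Hl01 : 0 < l < 1) by (split; nra).
  exists (s2 + l * (s1 - s2)), (t2 + l * (t1 - t2)). repeat split; try nra.
  replace (p1eval (level g) (tri_map g (s2 + l * (s1 - s2)) (t2 + l * (t1 - t2))))
    with (f2 - l * (f2 - f1)) by (unfold f1, f2; rewrite !p1eval_tri_map; ring).
  lra.
Qed.

Lemma open_triangle_perturb (s t d1 d2 : R) : 0 < s -> 0 < t -> s + t < 1 ->
  exists e, 0 < e /\ 0 < s + e * d1 /\ 0 < t + e * d2 /\ (s + e * d1) + (t + e * d2) < 1.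
Proof.
  intros Hs Ht Hst.
  set (m := Rmin s (Rmin t (1 - s - t))).
  assert (Hm : 0 < m /\ m <= s /\ m <= t /\ m <= 1 - s - t).
  { unfold m, Rmin. repeat destruct Rle_dec; lra. }
  set (K := Rabs d1 + Rabs d2 + 1).
  pose proof (Rle_abs d1). pose proof (Rle_abs (- d1)).
  pose proof (Rle_abs d2). pose proof (Rle_abs (- d2)).
  rewrite Rabs_Ropp in *.
  set (e := m / (2 * K)).
  assert (He : e * K = m / 2) by (unfold e; field; unfold K; lra).
  assert (He0 : 0 < e) by (unfold e; apply Rdiv_lt_0_compat; unfold K; lra).
  exists e. unfold K in He. repeat split; nra.
Qed.

Lemma Gamma_tangent_pair (g : geom) : tri_nondeg g -> v2dot (gn g) (gn g) = 1 ->
  (exists x, in_Tp g x) -> (exists x, in_Tm g x) ->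
  exists X Y, on_Gamma g X /\ on_Gamma g Y /\ v2dot (tangent g) (v2sub X Y) <> 0.
Proof.
  intros HT Hn Hp Hm.
  destruct (Gamma_meets_interior g Hp Hm) as (s & t & Hs & Ht & Hst & H0).
  set (c1 := p1eval (level g) (gA2 g) - p1eval (level g) (gA1 g)).
  set (c2 := p1eval (level g) (gA3 g) - p1eval (level g) (gA1 g)).
  destruct (open_triangle_perturb s t c2 (- c1) Hs Ht Hst) as (e & He & H1 & H2 & H3).
  assert (H0' : p1eval (level g) (tri_map g (s + e * c2) (t + e * - c1)) = 0).
  { rewrite p1eval_tri_map in *. fold c1 c2 in H0 |- *. rewrite <- H0. ring. }
  rewrite p1eval_level in H0, H0'.
  exists (tri_map g s t), (tri_map g (s + e * c2) (t + e * - c1)).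
  split; [|split].
  - split; [exists s, t; auto | lra].
  - split; [exists (s + e * c2), (t + e * - c1); auto | lra].
  - replace (v2dot (tangent g) (v2sub (tri_map g s t) (tri_map g (s + e * c2) (t + e * - c1))))
      with (- e * (let u := v2sub (gA2 g) (gA1 g) in let w := v2sub (gA3 g) (gA1 g) in
                   fst u * snd w - snd u * fst w) * v2dot (gn g) (gn g)).
    + rewrite Hn, Rmult_1_r. apply Rmult_integral_contrapositive. split; [lra | exact HT].
    + unfold c1, c2. rewrite !p1eval_level.
      unfold tangent, rot_cw, tri_map, v2dot, v2add, v2sub, v2scal.
      destruct g as [[x1 y1] [x2 y2] [x3 y3] [n1 n2] d]; simpl. ring.
Qed.

Lemma p1_vanishing_on_Gamma (g : geom) (p : P1) :
  tri_nondeg g -> v2dot (gn g) (gn g) = 1 -> (exists x, in_Tp g x) -> (exists x, in_Tm g x) ->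
  (forall x, on_Gamma g x -> p1eval p x = 0) ->
  p = p1scal (v2dot (p1grad p) (gn g)) (level g).
Proof.
  intros HT Hn Hp Hm Hz.
  destruct (Gamma_tangent_pair g HT Hn Hp Hm) as (X & Y & HX & HY & HXY).
  pose proof (Hz X HX) as pX. pose proof (Hz Y HY) as pY.
  destruct HX as [_ nX]. destruct HY as [_ nY].
  revert Hn pX pY nX nY HXY.
  unfold tangent, rot_cw, level, p1scal, p1grad, p1eval, v2dot, v2sub, v2scal.
  destruct g as [A1 A2 A3 [n1 n2] d], p as [c [a b]], X as [x1 x2], Y as [y1 y2]; simpl.
  intros Hn pX pY nX nY HXY.
  assert (Hpar : (a * n2 - b * n1) * (n2 * (x1 - y1) + - n1 * (x2 - y2)) = 0) by nsatz.
  apply Rmult_integral in Hpar as [Hpar | Hpar]; [|contradiction].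
  f_equal; [|f_equal]; nsatz.
Qed.

(** * Interface conditions of IFE functions *)

Lemma v2dot_scal_l (r : R) (x y : vec) : v2dot (v2scal r x) y = r * v2dot x y.
Proof. unfold v2dot, v2scal; simpl. ring. Qed.

Definition p1vtimes (p : P1) (c : vec) : P1v := (p1scal (fst c) p, p1scal (snd c) p).

Lemma p1veval_add_times (v : P1v) (p : P1) (c x : vec) :
  p1veval (p1vadd v (p1vtimes p c)) x = v2add (p1veval v x) (v2scal (p1eval p x) c).
Proof.
  unfold p1veval, p1vadd, p1vtimes, v2add, v2scal; simpl.
  rewrite !p1eval_add, !p1eval_scal. f_equal; ring.
Qed.

(* Continuity across Gamma makes the jump of each component a multiple of the level function;
   continuity of the divergence then forces the jump vector to be tangential. *)
Lemma ife_velocity_jump (g : geom) (mup mum : R) (D : ife) :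
  tri_nondeg g -> v2dot (gn g) (gn g) = 1 -> (exists x, in_Tp g x) -> (exists x, in_Tm g x) ->
  in_IFE g mup mum D ->
  exists a, vp D = p1vadd (vm D) (p1vtimes (level g) (v2scal a (tangent g))).
Proof.
  intros HT Hn Hp Hm (_ & Hcont & Hdiv).
  destruct D as [[p1 p2] [m1 m2] qp qm]; cbn [vp vm fst snd] in *.
  assert (J1 : forall x, on_Gamma g x -> p1eval (p1add p1 (p1scal (-1) m1)) x = 0).
  { intros x Hx. injection (Hcont x Hx). intros. rewrite p1eval_add, p1eval_scal. lra. }
  assert (J2 : forall x, on_Gamma g x -> p1eval (p1add p2 (p1scal (-1) m2)) x = 0).
  { intros x Hx. injection (Hcont x Hx). intros. rewrite p1eval_add, p1eval_scal. lra. }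
  apply (p1_vanishing_on_Gamma g _ HT Hn Hp Hm) in J1, J2.
  set (b1 := v2dot (p1grad (p1add p1 (p1scal (-1) m1))) (gn g)) in J1.
  set (b2 := v2dot (p1grad (p1add p2 (p1scal (-1) m2))) (gn g)) in J2.
  exists (b1 * snd (gn g) - b2 * fst (gn g)).
  revert Hn Hdiv J1 J2. clearbody b1 b2.
  unfold p1vadd, p1vtimes, p1vdiv, tangent, rot_cw, level, p1grad, p1add, p1scal, v2dot, v2add, v2scal.
  destruct g as [A1 A2 A3 [n1 n2] d], p1 as [c1 [a1 e1]], p2 as [c2 [a2 e2]],
    m1 as [c1' [a1' e1']], m2 as [c2' [a2' e2']]; simpl.
  intros Hn Hdiv J1 J2. injection J1. injection J2. intros. clear J1 J2 Hcont.
  repeat f_equal; nsatz.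
Qed.

Lemma vfun_tangent_jump (g : geom) (D : ife) (a : R) :
  vp D = p1vadd (vm D) (p1vtimes (level g) (v2scal a (tangent g))) ->
  forall x, vfun g D x = v2add (p1veval (vm D) x) (v2scal (wfun g x) (v2scal a (tangent g))).
Proof.
  intros HV x. rewrite wfun_pos_part. unfold vfun, pw. rewrite HV, p1veval_add_times, p1eval_level.
  destruct Rlt_dec.
  - rewrite Rmax_left by lra. reflexivity.
  - rewrite Rmax_right by lra. unfold p1veval, v2add, v2scal; simpl. f_equal; ring.
Qed.

Lemma vJ0_piCR (g : geom) (lam : nat -> P1) (D : ife) :
  vJ0 g lam D = (piCR g lam (fun x => fst (vfun g D x)), piCR g lam (fun x => snd (vfun g D x))).
Proof.
  unfold vJ0, piCR, phi, p1vadd, p1vscal, p1vzero; simpl.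
  f_equal; apply p1_ext; intros x;
    unfold p1eval, p1add, p1scal, p1zero, v2dot, v2add, v2scal; simpl; ring.
Qed.

Lemma vJ0_tangent_jump (g : geom) (lam : nat -> P1) (D : ife) (a : R) :
  tri_nondeg g -> is_CR_basis g lam ->
  vp D = p1vadd (vm D) (p1vtimes (level g) (v2scal a (tangent g))) ->
  vJ0 g lam D = p1vadd (vm D) (p1vtimes (piCR g lam (wfun g)) (v2scal a (tangent g))).
Proof.
  intros HT HL HV.
  assert (Hw : forall j, (1 <= j <= 3)%nat -> edge_integrable (edge g j) (wfun g)).
  { intros j _. unfold edge_integrable.
    eapply ex_RInt_ext; [|apply (edge_integrable_pos_part (level g))].
    intros; simpl; rewrite wfun_pos_part; reflexivity. }
  rewrite vJ0_piCR. unfold p1vadd, p1vtimes; cbn [fst snd].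
  rewrite (piCR_ext g lam _ (fun x => p1eval (fst (vm D)) x + fst (v2scal a (tangent g)) * wfun g x)),
          (piCR_ext g lam (fun x => snd (vfun g D x))
             (fun x => p1eval (snd (vm D)) x + snd (v2scal a (tangent g)) * wfun g x)),
          !piCR_add_P1 by (auto; intros; rewrite (vfun_tangent_jump g D a HV); simpl; ring).
  reflexivity.
Qed.

Lemma vJ0_dofs (g : geom) (lam : nat -> P1) (D1 D2 : ife) :
  (forall i, (1 <= i <= 6)%nat -> Ndof g D1 i = Ndof g D2 i) -> vJ0 g lam D1 = vJ0 g lam D2.
Proof.
  intros H. unfold vJ0. cbn [List.seq fold_right].
  rewrite (H 1%nat), (H 2%nat), (H 3%nat), (H 4%nat), (H 5%nat), (H 6%nat) by lia.
  reflexivity.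
Qed.

(* eps(p t) n = ((grad p . n) t + (t . n) grad p) / 2 = (a rho / 2) rot_cw n,
   as t = a rot_cw n is orthogonal to n. *)
Lemma sigma_normal_add_tangent (mu q a rho : R) (v : P1v) (p : P1) (n : vec) :
  v2dot n n = 1 -> p1grad p = v2scal rho n ->
  mvec (sigma mu (p1vadd v (p1vtimes p (v2scal a (rot_cw n)))) q) n
  = v2add (v2sub (v2scal (2 * mu) (mvec (epsilon v) n)) (v2scal q n)) (v2scal (mu * a * rho) (rot_cw n)).
Proof.
  destruct v as [[c1 [g11 g12]] [c2 [g21 g22]]], p as [c [p1 p2]], n as [n1 n2].
  unfold p1grad, v2scal; simpl. intros Hn Hp. injection Hp as -> ->.
  unfold sigma, epsilon, mscal, madd, mtr, mid, p1vgrad, p1grad, p1vadd, p1vtimes, p1add, p1scal,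
    mvec, rot_cw, v2dot, v2add, v2sub, v2scal; simpl.
  unfold v2dot in Hn; simpl in Hn. unfold Rdiv.
  (* nsatz treats [/ 2] as an atom *)
  assert (Ihalf : 2 * / 2 = 1) by field.
  f_equal; nsatz.
Qed.

Lemma stress_jump_components (mup mum qp qm a rho : R) (v : P1v) (p : P1) (n : vec) :
  v2dot n n = 1 -> p1grad p = v2scal rho n ->
  v2sub (mvec (sigma mup (p1vadd v (p1vtimes p (v2scal a (rot_cw n)))) qp) n)
        (mvec (sigma mum v qm) n) = (0, 0) ->
  2 * (mup - mum) * v2dot (mvec (epsilon v) n) (rot_cw n) + mup * a * rho = 0 /\
  2 * (mup - mum) * v2dot (mvec (epsilon v) n) n = qp - qm.
Proof.
  intros Hn Hp Hjump.
  rewrite (sigma_normal_add_tangent mup qp a rho v p n Hn Hp) in Hjump.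
  replace (mvec (sigma mum v qm) n) with (v2sub (v2scal (2 * mum) (mvec (epsilon v) n)) (v2scal qm n))
    in Hjump
    by (unfold sigma, mvec, madd, mscal, mid, v2sub, v2scal, v2add, v2dot; simpl; f_equal; ring).
  destruct (mvec (epsilon v) n) as [e1 e2], n as [n1 n2].
  unfold rot_cw, v2dot, v2add, v2sub, v2scal in *; simpl in *.
  injection Hjump as J1 J2. clear Hp. split; nsatz.
Qed.

Lemma sigma_add_tangent_dots (mu a rho : R) (v : P1v) (p : P1) (n : vec) :
  v2dot n n = 1 -> p1grad p = v2scal rho n ->
  let s := mvec (sigma mu (p1vadd v (p1vtimes p (v2scal a (rot_cw n)))) 0) n in
  v2dot s (rot_cw n) = 2 * mu * v2dot (mvec (epsilon v) n) (rot_cw n) + mu * a * rho /\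
  v2dot s n = 2 * mu * v2dot (mvec (epsilon v) n) n.
Proof.
  intros Hn Hp s. unfold s. rewrite (sigma_normal_add_tangent mu 0 a rho v p n Hn Hp).
  destruct (mvec (epsilon v) n) as [e1 e2], n as [n1 n2].
  unfold rot_cw, v2dot, v2add, v2sub, v2scal in *; simpl in *. clear Hp. split; nsatz.
Qed.

Section Representation.

Variables (g : geom) (mup mum : R) (lam : nat -> P1).
Hypothesis HT : tri_nondeg g.
Hypothesis Hn : v2dot (gn g) (gn g) = 1.
Hypothesis HTp : exists x, in_Tp g x.
Hypothesis HTm : exists x, in_Tm g x.
Hypothesis Hmup : 0 < mup.
Hypothesis Hmum : 0 < mum.
Hypothesis Hlam : is_CR_basis g lam.

Lemma c2_den_pos : 0 < c2_den g lam mup mum.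
Proof.
  destruct (piCR_wfun_grad g lam HT Hlam HTp HTm) as (rho & Hrho & Hgrad).
  assert (Hk : 0 < mum / mup) by (apply Rdiv_lt_0_compat; assumption).
  unfold c2_den. rewrite Hgrad, v2dot_scal_l, Hn, Rmult_1_r.
  nra.
Qed.

Lemma ife_stress_jump (D : ife) (a : R) : in_IFE g mup mum D ->
  vp D = p1vadd (vm D) (p1vtimes (level g) (v2scal a (tangent g))) ->
  2 * (mup - mum) * v2dot (mvec (epsilon (vm D)) (gn g)) (tangent g) + mup * a = 0 /\
  2 * (mup - mum) * v2dot (mvec (epsilon (vm D)) (gn g)) (gn g) = qp D - qm D.
Proof.
  intros [Hjump _] HV. rewrite HV in Hjump.
  assert (Hgrad : p1grad (level g) = v2scal 1 (gn g))
    by (unfold p1grad, level, v2scal; simpl; rewrite !Rmult_1_l; destruct (gn g); reflexivity).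
  destruct (stress_jump_components mup mum (qp D) (qm D) a 1 (vm D) (level g) (gn g) Hn Hgrad Hjump)
    as [J1 J2].
  split; [rewrite <- J1; unfold tangent; ring | exact J2].
Qed.

Lemma ife_v_representation (D : ife) : in_IFE g mup mum D ->
  forall x, vfun g D x = v2add (p1veval (vJ0 g lam D) x) (v2scal (cJ2 g lam mup mum D) (vJ2 g lam x)).
Proof.
  intros HD.
  destruct (ife_velocity_jump g mup mum D HT Hn HTp HTm HD) as [a HV].
  destruct (piCR_wfun_grad g lam HT Hlam HTp HTm) as (rho & _ & Hgrad).
  destruct (ife_stress_jump D a HD HV) as [J _].
  assert (HJ := vJ0_tangent_jump g lam D a HT Hlam HV).
  assert (Hden := c2_den_pos).
  assert (Hc2 : cJ2 g lam mup mum D = a).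
  { unfold cJ2. rewrite HJ.
    destruct (sigma_add_tangent_dots (mum / mup - 1) a rho (vm D) (piCR g lam (wfun g)) (gn g) Hn Hgrad)
      as [S _].
    unfold tangent in *. rewrite S.
    unfold c2_den in *. rewrite Hgrad, v2dot_scal_l, Hn, Rmult_1_r in *.
    set (E := v2dot (mvec (epsilon (vm D)) (gn g)) (rot_cw (gn g))) in *.
    assert (HE : 2 * (mum / mup - 1) * E = a).
    { apply (Rmult_eq_reg_l mup); [|lra].
      replace (mup * (2 * (mum / mup - 1) * E)) with (- (2 * (mup - mum) * E)) by (field; lra).
      lra. }
    rewrite HE. replace (a + (mum / mup - 1) * a * rho) with (a * (1 + (mum / mup - 1) * rho)) by ring.
    unfold Rdiv. rewrite Rmult_assoc, Rinv_r, Rmult_1_r by lra. reflexivity. }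
  intros x. rewrite (vfun_tangent_jump g D a HV x), HJ, Hc2, p1veval_add_times.
  unfold vJ2. destruct (tangent g) as [t1 t2], (p1veval (vm D) x) as [v1 v2].
  unfold v2add, v2scal; simpl. f_equal; ring.
Qed.

Lemma ife_q_representation (D : ife) : in_IFE g mup mum D ->
  forall x, qfun g D x = qJ0 g D + cJ1 g lam mup mum D * qJ1 g x.
Proof.
  intros HD.
  destruct (ife_velocity_jump g mup mum D HT Hn HTp HTm HD) as [a HV].
  destruct (piCR_wfun_grad g lam HT Hlam HTp HTm) as (rho & _ & Hgrad).
  destruct (ife_stress_jump D a HD HV) as [_ J].
  assert (Hc1 : cJ1 g lam mup mum D = qm D - qp D).
  { unfold cJ1. rewrite (vJ0_tangent_jump g lam D a HT Hlam HV).
    destruct (sigma_add_tangent_dots (mum - mup) a rho (vm D) (piCR g lam (wfun g)) (gn g) Hn Hgrad)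
      as [_ S].
    unfold tangent. rewrite S. lra. }
  set (m := tri_mean g (fun y => heaviside (p1eval (level g) y))).
  assert (Hq0 : qJ0 g D = qm D + (qp D - qm D) * m).
  { unfold qJ0. simpl. rewrite (tri_mean_ext g _ _ (qfun_heaviside g D)).
    apply tri_mean_heaviside_affine. }
  assert (Hz : pi0 g (zfun g) = 0 + -1 * m).
  { unfold pi0. rewrite (tri_mean_ext g _ _ (zfun_heaviside g)).
    apply tri_mean_heaviside_affine. }
  intros x. unfold qJ1. rewrite Hq0, Hc1, Hz, qfun_heaviside, zfun_heaviside. ring.
Qed.

End Representation.

Theorem lemma4p4 (g : geom) (mup mum : R) (lam : nat -> P1)
  (HT : tri_nondeg g)
  (Hn : v2dot (gn g) (gn g) = 1)
  (HTp : exists x, in_Tp g x)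
  (HTm : exists x, in_Tm g x)
  (Hmup : 0 < mup) (Hmum : 0 < mum)
  (Hlam : is_CR_basis g lam) :
  (* unisolvence *)
  (forall D1 D2 : ife, in_IFE g mup mum D1 -> in_IFE g mup mum D2 ->
     (forall i, (1 <= i <= 7)%nat -> Ndof g D1 i = Ndof g D2 i) ->
     forall x, in_Tp g x \/ in_Tm g x ->
       vfun g D1 x = vfun g D2 x /\ qfun g D1 x = qfun g D2 x)
  /\
  (* explicit representation *)
  (forall D : ife, in_IFE g mup mum D ->
     c2_den g lam mup mum <> 0 /\
     forall x, in_Tp g x \/ in_Tm g x ->
       vfun g D x = v2add (p1veval (vJ0 g lam D) x) (v2scal (cJ2 g lam mup mum D) (vJ2 g lam x))
       /\ qfun g D x = qJ0 g D + cJ1 g lam mup mum D * qJ1 g x).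
Proof.
  split.
  - intros D1 D2 H1 H2 HN x _.
    assert (HvJ : vJ0 g lam D1 = vJ0 g lam D2) by (apply vJ0_dofs; intros; apply HN; lia).
    rewrite !(ife_v_representation g mup mum lam HT Hn HTp HTm Hmup Hmum Hlam _ H1),
            !(ife_v_representation g mup mum lam HT Hn HTp HTm Hmup Hmum Hlam _ H2),
            !(ife_q_representation g mup mum lam HT Hn HTp HTm Hlam _ H1),
            !(ife_q_representation g mup mum lam HT Hn HTp HTm Hlam _ H2).
    unfold cJ1, cJ2, qJ0. rewrite HvJ, (HN 7%nat) by lia. split; reflexivity.
  - intros D HD. split.
    + apply Rgt_not_eq, (c2_den_pos g mup mum lam HT Hn HTp HTm Hmup Hmum Hlam).
    + intros x _. split.
      * apply (ife_v_representation g mup mum lam HT Hn HTp HTm Hmup Hmum Hlam _ HD).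
      * apply (ife_q_representation g mup mum lam HT Hn HTp HTm Hlam _ HD).
Qed.
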